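(* Let $0<b\leq a$ and let $\mathcal E(a,b)=\{x=(x_1,x_2)\in\mathbb R^2 : (x_1/a)^2+(x_2/b)^2=1\}$. For $q=(q_1,q_2)\in\mathbb R^2$ define $$\mathbf d^2(q):=\min\{|x-q|^2 : x\in\mathcal E(a,b)\}$$ and the quartic polynomial in $\lambda$ $$P(\lambda):=\big((\lambda-a^2)(\lambda-b^2)\big)^2-a^2q_1^2(\lambda-b^2)^2-b^2q_2^2(\lambda-a^2)^2 .$$ Let $\lambda^*(q)$ denote the smallest real root of $P$. Then $$\mathbf d^2(q)=\begin{cases} \left(\dfrac{\lambda^*(q)}{a^2-\lambda^*(q)}\,q_1\right)^2+\left(\dfrac{\lambda^*(q)}{b^2-\lambda^*(q)}\,q_2\right)^2 & \text{if } q_2\neq 0 \text{ or } a^2-a|q_1|<b^2,\\[2mm] b^2 & \text{if } q_1=q_2=0,\\[2mm] b^2-\dfrac{b^2}{a^2-b^2}\,q_1^2 & \text{if } q_2=0,\ q_1\neq 0 \text{ and } a^2-a|q_1|\geq b^2. \end{cases}$$ Moreover, $\lambda^*(q)=a^2-a|q|$ if $a=b$; if $b<a$ and $q_2\neq0$, $\lambda^*(q)$ is the unique root of $P$ in $(-\infty,b^2)$; and if $b<a$ and $q_2=0$, $\lambda^*(q)=\min\{a^2-a|q_1|,\,b^2\}$.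
   Context: $|\cdot|$ denotes the Euclidean norm on $\mathbb R^2$. $\mathbf d^2(q)$ is the squared Euclidean distance from $q$ to the ellipse curve $\mathcal E(a,b)$ (centered at the origin with semi-axes $a$ along the $x_1$-axis and $b$ along the $x_2$-axis). *)

From Stdlib Require Import Reals Lra.
Open Scope R_scope.

Definition on_ellipse (a b : R) (x : R * R) : Prop :=
  (fst x / a) ^ 2 + (snd x / b) ^ 2 = 1.

Definition sqdist (x q : R * R) : R :=
  (fst x - fst q) ^ 2 + (snd x - snd q) ^ 2.

Definition norm2 (q : R * R) : R := sqrt (fst q ^ 2 + snd q ^ 2).

Definition is_d2 (a b : R) (q : R * R) (d2 : R) : Prop :=
  (exists x, on_ellipse a b x /\ sqdist x q = d2) /\
  (forall x, on_ellipse a b x -> d2 <= sqdist x q).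

Definition Pq (a b : R) (q : R * R) (l : R) : R :=
  ((l - a ^ 2) * (l - b ^ 2)) ^ 2
  - a ^ 2 * (fst q) ^ 2 * (l - b ^ 2) ^ 2
  - b ^ 2 * (snd q) ^ 2 * (l - a ^ 2) ^ 2.

Definition smallest_root (a b : R) (q : R * R) (l : R) : Prop :=
  Pq a b q l = 0 /\ forall m, Pq a b q m = 0 -> l <= m.

From Stdlib Require Import Reals Lra Psatz.
Open Scope R_scope.

(* The function y |-> |y - q|^2 - l ((y1/a)^2 + (y2/b)^2 - 1) is a quadratic with leading
   coefficients 1 - l/a^2 and 1 - l/b^2, hence convex when l <= b^2 <= a^2; a point x of the
   ellipse at which it is stationary therefore minimises |y - q|^2 on the ellipse (a Lagrange
   multiplier certificate).  For l < b^2 the stationary point is (a^2 q1/(a^2-l), b^2 q2/(b^2-l)),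
   and it lies on the ellipse exactly when P(l) = 0.  When q2 = 0 and a|q1| <= a^2 - b^2 one
   takes l = b^2 instead, with a point of the ellipse above q.

   Below b^2, P(l) = ((a^2-l)(b^2-l))^2 g(l) with g(l) = 1 - a^2 q1^2/(a^2-l)^2 - b^2 q2^2/(b^2-l)^2.
   If q2 <> 0, g is strictly decreasing there, and if moreover b < a then P(b^2) < 0 while
   P > 0 far to the left: so P has exactly one root below b^2, and it is its smallest root.
   If q2 = 0 or a = b, P splits as (l - c)^2 ((l - a^2)^2 - r^2) with r = a|q1| resp. a|q|,
   whose smallest root is min(a^2 - r, c). *)

Lemma is_d2_lagrange (a b l : R) (q x : R * R) :
  0 < a -> 0 < b -> l <= a ^ 2 -> l <= b ^ 2 -> on_ellipse a b x ->
  (a ^ 2 - l) * fst x = a ^ 2 * fst q -> (b ^ 2 - l) * snd x = b ^ 2 * snd q ->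
  is_d2 a b q (sqdist x q).
Proof.
  intros ha hb hla hlb hx hx1 hx2.
  split; [now exists x|].
  intros y hy.
  assert (key : sqdist y q - sqdist x q =
    (a ^ 2 - l) / a ^ 2 * (fst y - fst x) ^ 2 + (b ^ 2 - l) / b ^ 2 * (snd y - snd x) ^ 2
    + l * (((fst y / a) ^ 2 + (snd y / b) ^ 2) - ((fst x / a) ^ 2 + (snd x / b) ^ 2))).
  { destruct q as [q1 q2], x as [x1 x2], y as [y1 y2]; unfold sqdist; cbn [fst snd] in *.
    assert (q1 = (a ^ 2 - l) * x1 / a ^ 2) as -> by (rewrite hx1; field; lra).
    assert (q2 = (b ^ 2 - l) * x2 / b ^ 2) as -> by (rewrite hx2; field; lra).
    field; lra. }
  unfold on_ellipse in hx, hy; rewrite hx, hy in key.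
  assert (0 <= (a ^ 2 - l) / a ^ 2 * (fst y - fst x) ^ 2).
  { apply Rmult_le_pos; [apply Rle_mult_inv_pos; nra | apply pow2_ge_0]. }
  assert (0 <= (b ^ 2 - l) / b ^ 2 * (snd y - snd x) ^ 2).
  { apply Rmult_le_pos; [apply Rle_mult_inv_pos; nra | apply pow2_ge_0]. }
  lra.
Qed.

Definition lagrange_point (a b : R) (q : R * R) (l : R) : R * R :=
  (a ^ 2 * fst q / (a ^ 2 - l), b ^ 2 * snd q / (b ^ 2 - l)).

Definition secular (a b : R) (q : R * R) (l : R) : R :=
  1 - a ^ 2 * fst q ^ 2 / (a ^ 2 - l) ^ 2 - b ^ 2 * snd q ^ 2 / (b ^ 2 - l) ^ 2.

Lemma Pq_secular (a b l : R) (q : R * R) : l <> a ^ 2 -> l <> b ^ 2 ->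
  Pq a b q l = ((a ^ 2 - l) * (b ^ 2 - l)) ^ 2 * secular a b q l.
Proof. intros; unfold Pq, secular; field; lra. Qed.

Lemma secular_root (a b l : R) (q : R * R) : l <> a ^ 2 -> l <> b ^ 2 ->
  Pq a b q l = 0 -> secular a b q l = 0.
Proof.
  intros hla hlb hP; rewrite Pq_secular in hP by easy.
  apply Rmult_integral in hP as [h | h]; [|exact h].
  exfalso; apply pow_nonzero in h; [easy | apply Rmult_integral_contrapositive; lra].
Qed.

Lemma on_ellipse_lagrange_point (a b l : R) (q : R * R) :
  0 < a -> 0 < b -> l <> a ^ 2 -> l <> b ^ 2 -> secular a b q l = 0 ->
  on_ellipse a b (lagrange_point a b q l).
Proof.
  intros ha hb hla hlb hg; unfold on_ellipse, lagrange_point; cbn [fst snd].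
  rewrite <- (Rminus_0_r 1), <- hg; unfold secular; field; repeat split; lra.
Qed.

Lemma is_d2_of_root (a b l : R) (q : R * R) :
  0 < a -> 0 < b -> l < a ^ 2 -> l < b ^ 2 -> Pq a b q l = 0 ->
  is_d2 a b q ((l / (a ^ 2 - l) * fst q) ^ 2 + (l / (b ^ 2 - l) * snd q) ^ 2).
Proof.
  intros ha hb hla hlb hP.
  replace (_ + _) with (sqdist (lagrange_point a b q l) q)
    by (unfold sqdist, lagrange_point; cbn [fst snd]; field; lra).
  apply (is_d2_lagrange a b l); try lra.
  - apply on_ellipse_lagrange_point, secular_root; lra.
  - unfold lagrange_point; cbn [fst snd]; field; lra.
  - unfold lagrange_point; cbn [fst snd]; field; lra.
Qed.

Lemma is_d2_axis (a b c : R) (q : R * R) :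
  0 < b -> b <= a -> snd q = 0 -> (a ^ 2 - b ^ 2) * c = a ^ 2 * fst q -> (c / a) ^ 2 <= 1 ->
  is_d2 a b q ((c - fst q) ^ 2 + b ^ 2 * (1 - (c / a) ^ 2)).
Proof.
  intros hb hba hq2 hc hca.
  set (x := (c, b * sqrt (1 - (c / a) ^ 2))).
  assert (hs : sqrt (1 - (c / a) ^ 2) ^ 2 = 1 - (c / a) ^ 2) by (apply pow2_sqrt; lra).
  replace (_ + _) with (sqdist x q).
  2: { unfold sqdist, x; cbn [fst snd]; rewrite hq2, Rminus_0_r, Rpow_mult_distr, hs; ring. }
  apply (is_d2_lagrange a b (b ^ 2)); unfold x; cbn [fst snd]; try nra.
  unfold on_ellipse; cbn [fst snd].
  replace ((b * sqrt (1 - (c / a) ^ 2) / b) ^ 2) with (sqrt (1 - (c / a) ^ 2) ^ 2)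
    by (field; lra).
  rewrite hs; ring.
Qed.

Lemma is_d2_center (a b : R) (q : R * R) :
  0 < b -> b <= a -> fst q = 0 -> snd q = 0 -> is_d2 a b q (b ^ 2).
Proof.
  intros hb hba hq1 hq2.
  replace (b ^ 2) with ((0 - fst q) ^ 2 + b ^ 2 * (1 - (0 / a) ^ 2))
    by (rewrite hq1; unfold Rdiv; ring).
  apply is_d2_axis; auto; [rewrite hq1; ring | unfold Rdiv; lra].
Qed.

Lemma is_d2_axis_far (a b : R) (q : R * R) :
  0 < b -> b <= a -> snd q = 0 -> fst q <> 0 -> b ^ 2 <= a ^ 2 - a * Rabs (fst q) ->
  is_d2 a b q (b ^ 2 - b ^ 2 / (a ^ 2 - b ^ 2) * fst q ^ 2).
Proof.
  intros hb hba hq2 hq1 hfar.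
  assert (0 < Rabs (fst q)) by now apply Rabs_pos_lt.
  assert (ha : 0 < a) by lra.
  assert (hD : 0 < a ^ 2 - b ^ 2) by nra.
  set (c := a ^ 2 * fst q / (a ^ 2 - b ^ 2)).
  replace (_ - _) with ((c - fst q) ^ 2 + b ^ 2 * (1 - (c / a) ^ 2))
    by (unfold c; field; lra).
  apply is_d2_axis; auto; [unfold c; field; lra |].
  assert (hcD : (c / a) ^ 2 * (a ^ 2 - b ^ 2) ^ 2 = (a * Rabs (fst q)) ^ 2)
    by (unfold c; rewrite Rpow_mult_distr, pow2_abs; field; lra).
  assert (hD2 : 0 < (a ^ 2 - b ^ 2) ^ 2) by nra.
  assert (hfar2 : (a * Rabs (fst q)) ^ 2 <= (a ^ 2 - b ^ 2) ^ 2)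
    by (apply pow_incr; split; [apply Rmult_le_pos; lra | lra]).
  apply (Rmult_le_reg_r _ _ _ hD2); lra.
Qed.

Lemma smallest_root_unique (a b l l' : R) (q : R * R) :
  smallest_root a b q l -> smallest_root a b q l' -> l = l'.
Proof. intros [hl hlmin] [hl' hl'min]; apply Rle_antisym; auto. Qed.

Lemma smallest_zero_factored (f : R -> R) (c s r : R) : 0 <= r ->
  (forall m, f m = (m - c) ^ 2 * ((m - s) ^ 2 - r ^ 2)) ->
  f (Rmin (s - r) c) = 0 /\ forall m, f m = 0 -> Rmin (s - r) c <= m.
Proof.
  intros hr hf; split.
  - rewrite hf; unfold Rmin; destruct Rle_dec; ring.
  - intros m hm; rewrite hf in hm.
    destruct (Rle_or_lt (Rmin (s - r) c) m) as [|hlt]; [easy | exfalso].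
    assert (m < s - r) by (eapply Rlt_le_trans; [exact hlt | apply Rmin_l]).
    assert (m < c) by (eapply Rlt_le_trans; [exact hlt | apply Rmin_r]).
    assert (0 < (m - c) ^ 2) by nra.
    assert (0 < (m - s) ^ 2 - r ^ 2) by nra.
    assert (0 < (m - c) ^ 2 * ((m - s) ^ 2 - r ^ 2)) by now apply Rmult_lt_0_compat.
    lra.
Qed.

Lemma smallest_root_circle (a : R) (q : R * R) : 0 <= a ->
  smallest_root a a q (a ^ 2 - a * norm2 q).
Proof.
  intros ha.
  assert (hn : 0 <= a * norm2 q) by (apply Rmult_le_pos; [lra | apply sqrt_pos]).
  rewrite <- (Rmin_left (a ^ 2 - a * norm2 q) (a ^ 2)) by lra.
  apply smallest_zero_factored; [easy|].
  intros m; unfold Pq, norm2.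
  rewrite (Rpow_mult_distr a), pow2_sqrt by nra; ring.
Qed.

Lemma smallest_root_axis (a b : R) (q : R * R) : 0 <= a -> snd q = 0 ->
  smallest_root a b q (Rmin (a ^ 2 - a * Rabs (fst q)) (b ^ 2)).
Proof.
  intros ha hq2.
  apply smallest_zero_factored; [apply Rmult_le_pos; [lra | apply Rabs_pos]|].
  intros m; unfold Pq; rewrite hq2, (Rpow_mult_distr a), pow2_abs; ring.
Qed.

Lemma secular_decreasing (a b m1 m2 : R) (q : R * R) :
  0 < b -> b <= a -> snd q <> 0 -> m1 < m2 -> m2 < b ^ 2 ->
  secular a b q m2 < secular a b q m1.
Proof.
  intros hb hba hq2 h12 h2.
  assert (0 < snd q ^ 2) by (rewrite <- Rsqr_pow2; now apply Rsqr_pos_lt).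
  assert (hv : 0 < b ^ 2 * snd q ^ 2) by (apply Rmult_lt_0_compat; nra).
  assert (b ^ 2 <= a ^ 2) by nra.
  assert (/ (a ^ 2 - m1) ^ 2 <= / (a ^ 2 - m2) ^ 2).
  { apply Rinv_le_contravar; [apply pow_lt; lra | apply pow_incr; lra]. }
  assert (/ (b ^ 2 - m1) ^ 2 < / (b ^ 2 - m2) ^ 2).
  { apply Rinv_lt_contravar; [apply Rmult_lt_0_compat; apply pow_lt; lra | nra]. }
  unfold secular, Rdiv.
  assert (a ^ 2 * fst q ^ 2 * / (a ^ 2 - m1) ^ 2 <= a ^ 2 * fst q ^ 2 * / (a ^ 2 - m2) ^ 2)
    by (apply Rmult_le_compat_l; nra).
  assert (b ^ 2 * snd q ^ 2 * / (b ^ 2 - m1) ^ 2 < b ^ 2 * snd q ^ 2 * / (b ^ 2 - m2) ^ 2)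
    by (apply Rmult_lt_compat_l; lra).
  lra.
Qed.

Lemma Pq_pos_below_root (a b m z : R) (q : R * R) :
  0 < b -> b <= a -> snd q <> 0 -> m < z -> z < b ^ 2 -> Pq a b q z = 0 ->
  0 < Pq a b q m.
Proof.
  intros hb hba hq2 hmz hz hPz.
  assert (b ^ 2 <= a ^ 2) by nra.
  assert (secular a b q z = 0) by (apply secular_root; lra).
  pose proof (secular_decreasing a b m z q hb hba hq2 hmz hz).
  rewrite Pq_secular by lra.
  apply Rmult_lt_0_compat; [apply pow_lt; apply Rmult_lt_0_compat|]; lra.
Qed.

Lemma secular_pos_far_left (a b : R) (q : R * R) : 0 < b -> b <= a ->
  0 < secular a b q (b ^ 2 - (a ^ 2 * fst q ^ 2 + b ^ 2 * snd q ^ 2 + 1)).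
Proof.
  intros hb hba.
  set (u := a ^ 2 * fst q ^ 2); set (v := b ^ 2 * snd q ^ 2); set (K := u + v + 1).
  assert (0 <= u) by (unfold u; nra). assert (0 <= v) by (unfold v; nra).
  assert (hK : 1 <= K) by (unfold K; lra).
  assert (hAK : K <= a ^ 2 - (b ^ 2 - K)) by nra.
  assert (/ (a ^ 2 - (b ^ 2 - K)) ^ 2 <= / K ^ 2).
  { apply Rinv_le_contravar; [apply pow_lt; lra | apply pow_incr; lra]. }
  assert ((u + v) * / K ^ 2 < 1).
  { rewrite <- (Rinv_r (K ^ 2)) by (apply pow_nonzero; lra).
    apply Rmult_lt_compat_r; [apply Rinv_0_lt_compat, pow_lt; lra | unfold K; nra]. }
  unfold secular, Rdiv; fold u v.
  replace (b ^ 2 - (b ^ 2 - K)) with K by ring.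
  assert (u * / (a ^ 2 - (b ^ 2 - K)) ^ 2 <= u * / K ^ 2) by (apply Rmult_le_compat_l; lra).
  lra.
Qed.

Lemma Pq_root_below_b2 (a b : R) (q : R * R) : 0 < b -> b < a -> snd q <> 0 ->
  exists z, z < b ^ 2 /\ Pq a b q z = 0.
Proof.
  intros hb hba hq2.
  set (M := b ^ 2 - (a ^ 2 * fst q ^ 2 + b ^ 2 * snd q ^ 2 + 1)).
  assert (hM : M < b ^ 2) by (unfold M; nra).
  assert (hab : b ^ 2 < a ^ 2) by nra.
  assert (hPM : 0 < Pq a b q M).
  { rewrite Pq_secular by nra.
    apply Rmult_lt_0_compat; [apply pow_lt; apply Rmult_lt_0_compat; lra|].
    apply secular_pos_far_left; lra. }
  assert (hPb : Pq a b q (b ^ 2) < 0).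
  { assert (0 < snd q ^ 2) by (rewrite <- Rsqr_pow2; now apply Rsqr_pos_lt).
    assert (0 < (a ^ 2 - b ^ 2) ^ 2) by (apply pow_lt; lra).
    assert (0 < b ^ 2 * snd q ^ 2 * (a ^ 2 - b ^ 2) ^ 2)
      by (apply Rmult_lt_0_compat; [apply Rmult_lt_0_compat|]; nra).
    unfold Pq; replace (b ^ 2 - b ^ 2) with 0 by ring; nra. }
  assert (hc : continuity (fun l => - Pq a b q l)) by (unfold Pq; reg).
  destruct (IVT _ M (b ^ 2) hc hM ltac:(lra) ltac:(lra)) as [z [[_ hzb] hz]].
  exists z; split; [|lra].
  destruct hzb as [|e]; [easy|]; rewrite e in hz; lra.
Qed.

Lemma smallest_root_below_b2 (a b : R) (q : R * R) : 0 < b -> b < a -> snd q <> 0 ->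
  exists l, smallest_root a b q l /\ l < b ^ 2 /\
    forall m, m < b ^ 2 -> Pq a b q m = 0 -> m = l.
Proof.
  intros hb hba hq2.
  destruct (Pq_root_below_b2 a b q hb hba hq2) as [z [hzb hz]].
  assert (hmin : forall m, Pq a b q m = 0 -> z <= m).
  { intros m hm; destruct (Rle_or_lt z m) as [|hmz]; [easy|].
    pose proof (Pq_pos_below_root a b m z q hb (Rlt_le _ _ hba) hq2 hmz hzb hz); lra. }
  exists z; split; [easy | split; [easy|]].
  intros m hmb hm; apply Rle_antisym; [|now apply hmin].
  destruct (Rle_or_lt m z) as [|hzm]; [easy|].
  pose proof (Pq_pos_below_root a b z m q hb (Rlt_le _ _ hba) hq2 hzm hmb hm); lra.
Qed.

Lemma smallest_root_exists (a b : R) (q : R * R) : 0 < b -> b <= a ->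
  exists l, smallest_root a b q l.
Proof.
  intros hb hba.
  destruct (Req_dec (snd q) 0) as [hq2 | hq2].
  - eexists; apply smallest_root_axis; [lra | easy].
  - destruct hba as [hlt | ->].
    + destruct (smallest_root_below_b2 a b q hb hlt hq2) as (l & hl & _); now exists l.
    + eexists; apply smallest_root_circle; lra.
Qed.

Lemma smallest_root_lt_b2 (a b l : R) (q : R * R) : 0 < b -> b <= a ->
  smallest_root a b q l -> snd q <> 0 \/ a ^ 2 - a * Rabs (fst q) < b ^ 2 -> l < b ^ 2.
Proof.
  intros hb hba hl hq.
  destruct (Req_dec (snd q) 0) as [hq2 | hq2].
  - rewrite (smallest_root_unique _ _ _ _ _ hl (smallest_root_axis a b q ltac:(lra) hq2)).
    destruct hq as [| hnear]; [contradiction|].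
    pose proof (Rmin_l (a ^ 2 - a * Rabs (fst q)) (b ^ 2)); lra.
  - destruct hba as [hlt | ->].
    + destruct (smallest_root_below_b2 a b q hb hlt hq2) as (l' & hl' & hlb & _).
      now rewrite (smallest_root_unique _ _ _ _ _ hl hl').
    + rewrite (smallest_root_unique _ _ _ _ _ hl (smallest_root_circle a q ltac:(lra))).
      assert (0 < snd q ^ 2) by (rewrite <- Rsqr_pow2; now apply Rsqr_pos_lt).
      assert (0 < norm2 q) by (apply sqrt_lt_R0; nra).
      nra.
Qed.

Theorem mainTheorem1 (a b : R) (q : R * R) (hb : 0 < b) (hba : b <= a) :
  (exists l, smallest_root a b q l) /\
  (forall l, smallest_root a b q l ->
     ((snd q <> 0 \/ a ^ 2 - a * Rabs (fst q) < b ^ 2) ->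
        is_d2 a b q ((l / (a ^ 2 - l) * fst q) ^ 2 + (l / (b ^ 2 - l) * snd q) ^ 2)) /\
     ((fst q = 0 /\ snd q = 0) -> is_d2 a b q (b ^ 2)) /\
     ((snd q = 0 /\ fst q <> 0 /\ b ^ 2 <= a ^ 2 - a * Rabs (fst q)) ->
        is_d2 a b q (b ^ 2 - b ^ 2 / (a ^ 2 - b ^ 2) * (fst q) ^ 2)) /\
     (a = b -> l = a ^ 2 - a * norm2 q) /\
     ((b < a /\ snd q <> 0) ->
        l < b ^ 2 /\ forall m, m < b ^ 2 -> Pq a b q m = 0 -> m = l) /\
     ((b < a /\ snd q = 0) -> l = Rmin (a ^ 2 - a * Rabs (fst q)) (b ^ 2))).
Proof.
  split; [now apply smallest_root_exists|].
  intros l hl.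
  split; [|split; [|split; [|split; [|split]]]].
  - intros hq.
    pose proof (smallest_root_lt_b2 a b l q hb hba hl hq).
    apply is_d2_of_root; [lra | lra | nra | easy | apply hl].
  - intros [hq1 hq2]; now apply is_d2_center.
  - intros (hq2 & hq1 & hfar); now apply is_d2_axis_far.
  - intros <-; apply (smallest_root_unique _ _ _ _ _ hl), smallest_root_circle; lra.
  - intros [hlt hq2].
    destruct (smallest_root_below_b2 a b q hb hlt hq2) as (l' & hl' & hlb & huniq).
    now rewrite (smallest_root_unique _ _ _ _ _ hl hl').
  - intros [_ hq2]; apply (smallest_root_unique _ _ _ _ _ hl), smallest_root_axis; lra.
Qed.
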